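(* Let $f:\mathbb{R}^d\to\mathbb{R}$ be twice differentiable and strictly pseudoconvex with global minimizer $x_*$, and suppose $f(x)=\psi(\|x-x_*\|)$ for a twice differentiable $\psi:[0,\infty)\to\mathbb{R}$. Let \[ g(x)\coloneqq f(x_* )+\int_0^1\frac{\langle\nabla f(x_*+t(x-x_* )),\,x-x_*\rangle}{t}\,dt . \] If $\psi''(r)+\frac{\psi'(r)}{r}\ge 0$ for $r\in[0,M]$, then $g$ is convex on $\mathcal N=\{x:\ \|x-x_*\|\le M\}$.
   Context: $f$ is strictly pseudoconvex if for all $x\neq y$, $f(y)\le f(x)\Rightarrow\langle\nabla f(x),y-x\rangle<0$. $\|\cdot\|$ is the Euclidean norm. *)

From HB Require Import structures.
From mathcomp Require Import all_boot all_order all_algebra.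
From mathcomp Require Import all_classical all_reals all_analysis.
Set Implicit Arguments. Unset Strict Implicit. Unset Printing Implicit Defensive.
Import Order.TTheory GRing.Theory Num.Theory.
Import numFieldNormedType.Exports.
Local Open Scope ring_scope.
Local Open Scope classical_set_scope.

Section Defs.
Variables (R : realType) (d : nat).

Definition dotp (u v : 'rV[R]_d) : R := \sum_(i < d) u 0 i * v 0 i.
Definition enorm (u : 'rV[R]_d) : R := Num.sqrt (dotp u u).

Definition basis_vec (i : 'I_d) : 'rV[R]_d := delta_mx 0 i.

Definition grad (f : 'rV[R]_d -> R) (x : 'rV[R]_d) : 'rV[R]_d :=
  \row_i ('D_(basis_vec i) f x).

Definition twice_differentiable (f : 'rV[R]_d -> R) : Prop :=
  (forall x, differentiable f x) /\
  (forall (i : 'I_d) x, differentiable (fun y => 'D_(basis_vec i) f y) x).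

Definition strictly_pseudoconvex (f : 'rV[R]_d -> R) : Prop :=
  forall x y : 'rV[R]_d, x != y -> f y <= f x -> dotp (grad f x) (y - x) < 0.

Definition gfun (f : 'rV[R]_d -> R) (xs : 'rV[R]_d) (x : 'rV[R]_d) : R :=
  f xs + \int[lebesgue_measure]_(t in `[0, 1]%classic)
            (dotp (grad f (xs + t *: (x - xs))) (x - xs) / t).

Definition convex_on (S : set 'rV[R]_d) (h : 'rV[R]_d -> R) : Prop :=
  forall x y : 'rV[R]_d, S x -> S y -> forall l : R, 0 <= l <= 1 ->
    h (l *: x + (1 - l) *: y) <= l * h x + (1 - l) * h y.
End Defs.

From HB Require Import structures.
From mathcomp Require Import all_boot all_order all_algebra.
From mathcomp Require Import all_classical all_reals all_analysis.
From mathcomp Require Import ring lra.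

Import Order.TTheory GRing.Theory Num.Theory.
Import numFieldNormedType.Exports.
Local Open Scope ring_scope.
Local Open Scope classical_set_scope.

(* Along a ray from [xs] the integrand of [g] is [r^2 psi'(t r) / (t r)] with
   [r = |x - xs|], so [g x = f xs + G |x - xs|] where [G r = r * int_0^r psi'(s)/s ds].
   Differentiating twice gives [G'' r = psi'' r + psi' r / r >= 0] on [(0, M]], so [G]
   is convex on [[0, M]].  Pseudoconvexity makes the integrand, hence [G], nonnegative;
   as [G 0 = 0], the convex [G] is nondecreasing on [[0, M]], and a convex nondecreasing
   function of the convex function [|x - xs|] is convex. *)

Section Euclidean.
Context {R : realType} {d : nat}.
Implicit Types (u v w : 'rV[R]_d).

Lemma dotpC u v : dotp u v = dotp v u.
Proof. by apply: eq_bigr => i _; rewrite mulrC. Qed.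

Lemma dotpDr u v w : dotp u (v + w) = dotp u v + dotp u w.
Proof. by rewrite /dotp -big_split; apply: eq_bigr => i _; rewrite mxE mulrDr. Qed.

Lemma dotpZr a u v : dotp u (a *: v) = a * dotp u v.
Proof. by rewrite /dotp mulr_sumr; apply: eq_bigr => i _; rewrite mxE mulrCA. Qed.

Lemma dotpNr u v : dotp u (- v) = - dotp u v.
Proof. by rewrite -scaleN1r dotpZr mulN1r. Qed.

Lemma dotpr0 u : dotp u 0 = 0.
Proof. by rewrite -(scale0r 0) dotpZr mul0r. Qed.

Lemma dotp_ge0 u : 0 <= dotp u u.
Proof. by apply: sumr_ge0 => i _; rewrite -expr2 sqr_ge0. Qed.

Lemma dotp_eq0 u : (dotp u u == 0) = (u == 0).
Proof.
apply/eqP/eqP => [uu0|->]; last exact: dotpr0.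
apply/rowP => i; rewrite mxE.
have /eqP : u 0 i * u 0 i = 0.
  apply: (@psumr_eq0P R _ xpredT (fun i => u 0 i * u 0 i)) => // j _.
  by rewrite -expr2 sqr_ge0.
by rewrite mulf_eq0 orbb => /eqP.
Qed.

Lemma dotp_basis u (i : 'I_d) : dotp u (basis_vec R i) = u 0 i.
Proof.
rewrite /dotp (bigD1 i) //= big1 ?addr0 => [|j ji].
  by rewrite mxE !eqxx mulr1.
by rewrite mxE (negbTE ji) andbF mulr0.
Qed.

Lemma dotp_sqr_le u v : dotp u v ^+ 2 <= dotp u u * dotp v v.
Proof.
have [->|v0] := eqVneq v 0; first by rewrite !dotpr0 expr0n mulr0.
have vv_gt0 : 0 < dotp v v by rewrite lt_def dotp_eq0 v0 dotp_ge0.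
(* expand [0 <= |(v.v) u - (u.v) v|^2 = (v.v) ((u.u)(v.v) - (u.v)^2)] *)
have := dotp_ge0 (dotp v v *: u - dotp u v *: v).
rewrite dotpDr dotpNr !dotpZr ![dotp (_ - _) _]dotpC !dotpDr !dotpNr !dotpZr.
rewrite (dotpC v u) => h; nra.
Qed.

Lemma enorm_ge0 u : 0 <= enorm u.
Proof. exact: sqrtr_ge0. Qed.

Lemma enorm0 : enorm (0 : 'rV[R]_d) = 0.
Proof. by rewrite /enorm dotpr0 sqrtr0. Qed.

Lemma enorm_gt0 u : (0 < enorm u) = (u != 0).
Proof. by rewrite sqrtr_gt0 lt_def dotp_eq0 dotp_ge0 andbT. Qed.

Lemma enormZ a u : enorm (a *: u) = `|a| * enorm u.
Proof.
rewrite /enorm dotpZr dotpC dotpZr mulrA -expr2 sqrtrM ?sqr_ge0 //.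
by rewrite sqrtr_sqr.
Qed.

Lemma enorm_basis (i : 'I_d) : enorm (basis_vec R i) = 1.
Proof. by rewrite /enorm dotp_basis mxE !eqxx sqrtr1. Qed.

Lemma enormD u v : enorm (u + v) <= enorm u + enorm v.
Proof.
have uv_le : dotp u v <= enorm u * enorm v.
  rewrite -sqrtrM ?dotp_ge0 //; apply: le_trans (ler_norm _) _.
  by rewrite -sqrtr_sqr ler_sqrt ?mulr_ge0 ?dotp_ge0 ?dotp_sqr_le.
rewrite -[leRHS]ger0_norm ?addr_ge0 ?enorm_ge0 // -sqrtr_sqr ler_sqrt ?sqr_ge0 //.
rewrite sqrrD !sqr_sqrtr ?dotp_ge0 // dotpDr ![dotp (_ + _) _]dotpC !dotpDr.
by rewrite (dotpC v u); lra.
Qed.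

End Euclidean.

Section LineDerivative.
Context {R : numFieldType} {V W : normedModType R}.
Variables (f : V -> W) (a v : V) (t : R).

Let difference_quotient_line :
  (fun h : R => h^-1 *: (f (h *: v + (a + t *: v)) - f (a + t *: v))) =
  (fun h : R => h^-1 *: (f (a + (h *: 1 + t) *: v) - f (a + t *: v))).
Proof. by apply: funext => h; rewrite [h *: 1]mulr1 scalerDl addrCA. Qed.

Lemma derive_line : 'D_v f (a + t *: v) = 'D_1 (fun s : R => f (a + s *: v)) t.
Proof. by rewrite /derive difference_quotient_line. Qed.

Lemma derivable_line :
  derivable f (a + t *: v) v -> derivable (fun s : R => f (a + s *: v)) t 1.
Proof. by rewrite /derivable difference_quotient_line. Qed.

End LineDerivative.

Lemma derivable1_continuous {R : numFieldType} {V : normedModType R} (f : R -> V) x :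
  derivable f x 1 -> {for x, continuous f}.
Proof. by move=> /derivable1_diffP/differentiable_continuous. Qed.

Lemma is_derive_mulr_const {R : numFieldType} (r t : R) :
  is_derive t 1 (fun s : R => s * r) r.
Proof.
have -> : (fun s : R => s * r) = (@id R) * cst r by apply: funext.
have := is_deriveM (is_derive_id t (1 : R)) (is_derive_cst r t 1).
by rewrite /= scaler0 add0r [r *: 1]mulr1.
Qed.

Lemma dotp_grad {R : realType} {d : nat} (f : 'rV[R]_d -> R) y v :
  differentiable f y -> dotp (grad f y) v = 'D_v f y.
Proof.
move=> df; rewrite (deriveE _ df) {2}(row_sum_delta v) linear_sum.
by apply: eq_bigr => i _; rewrite mxE (deriveE _ df) linearZ /= mulrC.
Qed.

Lemma derive_radial {R : realType} {d : nat} {f : 'rV[R]_d -> R} {xs v : 'rV[R]_d}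
    {psi : R -> R} {t : R} :
  (forall x, f x = psi (enorm (x - xs))) -> v != 0 -> 0 < t ->
  derivable psi (t * enorm v) 1 ->
  'D_v f (xs + t *: v) = enorm v * derive1 psi (t * enorm v).
Proof.
move=> f_radial v0 t_gt0 psi_der; have v_gt0 : 0 < enorm v by rewrite enorm_gt0.
have mul_der := is_derive_mulr_const (enorm v) t.
rewrite derive_line (@near_eq_derive _ _ _ _ (psi \o (fun s => s * enorm v))).
  rewrite -derive1E (derive1_comp (f := fun s => s * enorm v) (x := t) ex_derive psi_der).
  by rewrite [X in _ * X]derive1E derive_val mulrC.
near=> s; rewrite /= f_radial addrC addKr enormZ ger0_norm //.
by apply: ltW; near: s; exact: lt_nbhsr.
Unshelve. all: by end_near. Qed.

Lemma pseudoconvex_dotp_grad_gt0 {R : realType} {d : nat} {f : 'rV[R]_d -> R}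
    {xs x : 'rV[R]_d} :
  strictly_pseudoconvex f -> (forall y, f xs <= f y) -> x != xs ->
  0 < dotp (grad f x) (x - xs).
Proof.
move=> f_pc f_min xxs; have := f_pc x xs xxs (f_min x).
by rewrite -oppr_gt0 -dotpNr opprB.
Qed.

Lemma eq_Rintegral_itv_obnd {R : realType} (f g : R -> R) (a b : R) :
  {within `[a, b], continuous g} -> {in `]a, b], f =1 g} ->
  \int[lebesgue_measure]_(t in `[a, b]) f t =
  \int[lebesgue_measure]_(t in `[a, b]) g t.
Proof.
move=> g_cont fg.
have g_int : lebesgue_measure.-integrable `]a, b] (EFin \o g).
  have := continuous_compact_integrable (@segment_compact R a b) g_cont.
  apply: integrableS.
  - exact: measurable_itv.
  - exact: measurable_itv.
  - by apply: subset_itvr; rewrite bnd_simp.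
have f_int : lebesgue_measure.-integrable `]a, b] (EFin \o f).
  move: g_int; apply: eq_integrable; first exact: measurable_itv.
  by move=> t /fg /= ->.
by rewrite -!Rintegral_itv_obnd_cbnd //; apply: eq_Rintegral.
Qed.

Section IntervalConvexity.
Context {R : realType}.
Implicit Types (h : R -> R) (a b : R).

Definition convex_itv h a b : Prop :=
  forall x y l, a <= x <= b -> a <= y <= b -> 0 <= l <= 1 ->
    h (l * x + (1 - l) * y) <= l * h x + (1 - l) * h y.

Lemma convex_itv_second_derivative h a b :
  (forall x, a <= x <= b -> derivable h x 1) ->
  (forall x, a < x < b -> derivable ('D_1 h) x 1) ->
  (forall x, a < x < b -> 0 <= 'D_1 ('D_1 h) x) ->
  convex_itv h a b.
Proof.
move=> dh ddh ddh_ge0.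
have h_cont x : a <= x <= b -> {for x, continuous h}.
  by move=> /dh /derivable1_continuous.
suff conv_le x y l : a <= x -> x <= y -> y <= b -> 0 <= l <= 1 ->
    h (l * x + (1 - l) * y) <= l * h x + (1 - l) * h y.
  move=> x y l /andP[ax xb] /andP[ay yb] /andP[l0 l1].
  have [xy|/ltW yx] := leP x y; first by apply: conv_le => //; rewrite l0.
  have l01 : 0 <= 1 - l <= 1 by apply/andP; split; lra.
  have := conv_le y x (1 - l) ay yx xb l01.
  have -> : 1 - (1 - l) = l by ring.
  by rewrite addrC [in leRHS]addrC.
move=> ax xy yb /andP[l0 l1].
have := @second_derivative_convex R h x y _ _ _ _ _ (Itv01 l0 l1) xy.
rewrite !convRE /=; apply.
- by move=> z /andP[xz zy]; apply: ddh_ge0; apply/andP; split; lra.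
- by apply: cvg_at_left_filter; apply: h_cont; apply/andP; split; lra.
- by apply: cvg_at_right_filter; apply: h_cont; apply/andP; split; lra.
- by move=> z; rewrite in_itv /= => /andP[xz zy]; apply: dh; apply/andP; split; lra.
- by move=> z; rewrite in_itv /= => /andP[xz zy]; apply: ddh; apply/andP; split; lra.
Qed.

Lemma convex_itv_nondecreasing {h a b} : convex_itv h a b ->
  (forall x, a <= x <= b -> h a <= h x) ->
  forall x y, a <= x -> x <= y -> y <= b -> h x <= h y.
Proof.
move=> h_conv h_min x y ax xy yb.
have [ya|ay] := eqVneq y a; first by have -> : x = y by lra.
have ay_gt0 : 0 < y - a by rewrite subr_gt0 lt_neqAle eq_sym ay (le_trans ax xy).
set l := (x - a) / (y - a).
have l01 : 0 <= l <= 1.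
  apply/andP; split; first by apply: divr_ge0; [rewrite subr_ge0|exact: ltW].
  by rewrite ler_pdivrMr // mul1r lerB.
have xE : x = l * y + (1 - l) * a by rewrite /l; field; rewrite gt_eqF.
have y_in : a <= y <= b by rewrite yb (le_trans ax xy).
have a_in : a <= a <= b by rewrite lexx (le_trans ax (le_trans xy yb)).
have := h_conv y a l y_in a_in l01; rewrite -xE.
have : (1 - l) * h a <= (1 - l) * h y.
  by rewrite ler_wpM2l ?h_min //; case/andP: l01; lra.
lra.
Qed.

End IntervalConvexity.

Lemma convex_on_comp_enorm {R : realType} {d : nat} (h : R -> R) (xs : 'rV[R]_d) M :
  convex_itv h 0 M -> (forall x y, 0 <= x -> x <= y -> y <= M -> h x <= h y) ->
  convex_on [set x | enorm (x - xs) <= M] (fun x => h (enorm (x - xs))).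
Proof.
move=> h_conv h_mono x y /= xM yM l /andP[l0 l1].
have l'_ge0 : 0 <= 1 - l by rewrite subr_ge0.
set a := enorm (x - xs) in xM *; set b := enorm (y - xs) in yM *.
have a_ge0 : 0 <= a := enorm_ge0 _.
have b_ge0 : 0 <= b := enorm_ge0 _.
have z_le : enorm (l *: x + (1 - l) *: y - xs) <= l * a + (1 - l) * b.
  have -> : l *: x + (1 - l) *: y - xs = l *: (x - xs) + (1 - l) *: (y - xs).
    by apply/rowP => i; rewrite !mxE; ring.
  by apply: le_trans (enormD _ _) _; rewrite !enormZ !ger0_norm.
have a_in : 0 <= a <= M by rewrite a_ge0.
have b_in : 0 <= b <= M by rewrite b_ge0.
have l01 : 0 <= l <= 1 by rewrite l0.
apply: le_trans (h_conv a b l a_in b_in l01); apply: h_mono z_le _.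
  exact: enorm_ge0.
by have := ler_wpM2l l0 xM; have := ler_wpM2l l'_ge0 yM; lra.
Qed.

Lemma convex_on_addl {R : realType} {d : nat} (S : set 'rV[R]_d) (h : 'rV[R]_d -> R) c :
  convex_on S h -> convex_on S (fun x => c + h x).
Proof.
move=> h_conv x y Sx Sy l l01; have := h_conv x y Sx Sy l l01.
have -> : l * (c + h x) + (1 - l) * (c + h y) = c + (l * h x + (1 - l) * h y).
  by ring.
by rewrite lerD2l.
Qed.

Lemma convex_on_dim0 {R : realType} (S : set 'rV[R]_0) (h : 'rV[R]_0 -> R) :
  convex_on S h.
Proof.
move=> x y _ _ l _; have row0 (z : 'rV[R]_0) : z = 0 by apply/rowP => -[].
by rewrite (row0 (_ + _)) (row0 x) (row0 y) -mulrDl subrKC mul1r.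
Qed.

Definition slope {R : realType} (q : R -> R) (s : R) : R :=
  if s == 0 then 'D_1 q 0 else q s / s.

(* Any base point below [0] would do; it keeps [0] interior, where FTC1 is used. *)
Definition slope_primitive {R : realType} (q : R -> R) (x : R) : R :=
  \int[lebesgue_measure]_(t in `[-1, x]) slope q t.

Definition profile {R : realType} (q : R -> R) (r : R) : R :=
  r * (slope_primitive q r - slope_primitive q 0).

Section Slope.
Context {R : realType} {q : R -> R}.

Hypothesis q_derivable : forall s, derivable q s 1.
Hypothesis q0 : q 0 = 0.

Lemma mulr_slope (s : R) : s * slope q s = q s.
Proof.
by rewrite /slope; case: eqP => [->|/eqP s0]; rewrite ?mul0r ?q0 // mulrC divfK.
Qed.

Lemma slope_continuous : continuous (slope q).
Proof.
move=> s; have [->|s0] := eqVneq s 0.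
  apply/continuous_withinNx; rewrite {2}/slope eqxx.
  apply: cvg_trans (q_derivable 0); apply: near_eq_cvg; near=> h.
  have h0 : h != 0 by near: h; exact: nbhs_dnbhs_neq.
  by rewrite /slope (negbTE h0) /= q0 subr0 addr0 [h%:A]mulr1 mulrC.
apply: derivable1_continuous.
apply: (@near_eq_derivable _ _ _ (q * (fun y => (id y)^-1))); last first.
  exact: derivableM (q_derivable s) (derivableV s0 (@derivable_id _ _ s 1)).
near=> x; rewrite /slope ifF //; apply/negbTE; near: x.
exact: (@cvgr_neq0 _ _ _ (nbhs s) _ id s cvg_id s0).
Unshelve. all: by end_near. Qed.

Lemma scaled_slope_continuous (r : R) :
  continuous (fun t : R => r ^+ 2 * slope q (t * r)).
Proof.
move=> t; apply: (@continuousM _ _ (cst (r ^+ 2)) (slope q \o ( *%R^~ r))).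
  exact: cst_continuous.
apply: continuous_comp (slope_continuous _); apply: derivable1_continuous.
have mul_der := is_derive_mulr_const r t; exact: ex_derive.
Qed.

Lemma is_derive_slope_primitive {x : R} :
  -1 < x -> is_derive x 1 (slope_primitive q) (slope q x).
Proof.
move=> x_gt; have x_lt : x < x + 1 by rewrite ltrDl.
have slope_int := continuous_compact_integrable (@segment_compact R (-1) (x + 1))
  (continuous_subspaceT slope_continuous).
have [der Dval] := continuous_FTC1_closed x_lt slope_int x_gt (slope_continuous x).
by apply: DeriveDef; rewrite -?derive1E.
Qed.

Lemma is_derive_profile {r : R} :
  -1 < r -> is_derive r 1 (profile q) (slope_primitive q r - slope_primitive q 0 + q r).
Proof.
move=> r_gt; rewrite -mulr_slope.
have := is_deriveM (is_derive_id r 1)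
  (is_deriveB (is_derive_slope_primitive r_gt) (is_derive_cst (slope_primitive q 0) r 1)).
have -> : (@id R) * (slope_primitive q - cst (slope_primitive q 0)) = profile q.
  by apply: funext.
by rewrite subr0 /= [_ *: 1]mulr1 addrC.
Qed.

Lemma is_derive_derive_profile {r : R} :
  -1 < r -> is_derive r 1 ('D_1 (profile q)) (slope q r + 'D_1 q r).
Proof.
move=> r_gt.
pose D s := slope_primitive q s - slope_primitive q 0 + q s.
apply: (@near_eq_is_derive _ _ _ D).
  near=> s; have s_gt : -1 < s by near: s; exact: lt_nbhsr.
  by have ? := is_derive_profile s_gt; rewrite derive_val.
have := is_deriveD (is_deriveB (is_derive_slope_primitive r_gt)
  (is_derive_cst (slope_primitive q 0) r 1)) (DeriveDef (q_derivable r) erefl).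
by rewrite subr0.
Unshelve. all: by end_near. Qed.

Lemma profile_integral (r : R) : 0 <= r ->
  \int[lebesgue_measure]_(t in `[0, 1]) (r ^+ 2 * slope q (t * r)) = profile q r.
Proof.
move=> r_ge0.
pose Phi t := r * slope_primitive q (t * r).
have Phi_der (t : R) : 0 <= t -> is_derive t 1 Phi (r * (slope q (t * r) * r)).
  move=> t_ge0; have tr_gt : -1 < t * r.
    by rewrite (lt_le_trans _ (mulr_ge0 t_ge0 r_ge0)) ?ltrN10.
  have := is_deriveZ r (is_derive1_comp (f := slope_primitive q) (g := *%R^~ r)
    (is_derive_slope_primitive tr_gt) (is_derive_mulr_const r t)).
  by have -> : r \*: (slope_primitive q \o *%R^~ r) = Phi by apply: funext.
have Phi_cont (t : R) : 0 <= t -> {for t, continuous Phi}.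
  by move=> /Phi_der ?; apply: derivable1_continuous; exact: ex_derive.
have Phi_LR : derivable_oo_LRcontinuous Phi 0 1.
  split.
  - by move=> t; rewrite in_itv /= => /andP[/ltW/Phi_der ? _]; exact: ex_derive.
  - by apply: cvg_at_right_filter; apply: Phi_cont.
  - by apply: cvg_at_left_filter; apply: Phi_cont; exact: ler01.
have dPhi : {in `]0, 1[%R, Phi^`() =1 fun t => r ^+ 2 * slope q (t * r)}.
  move=> t; rewrite in_itv /= => /andP[/ltW/Phi_der ? _].
  by rewrite derive1E derive_val mulrCA -expr2 mulrC.
have := continuous_FTC2 ltr01 (continuous_subspaceT (scaled_slope_continuous r))
  Phi_LR dPhi.
by rewrite /Rintegral => ->; rewrite -EFinB /= /Phi /profile mul1r mul0r mulrBr.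
Qed.

Lemma profile_convex (M : R) :
  (forall r, 0 < r < M -> 0 <= 'D_1 q r + q r / r) -> convex_itv (profile q) 0 M.
Proof.
move=> DDq_ge0.
have gtN1 x : 0 <= x -> -1 < x by apply: lt_le_trans; rewrite ltrN10.
apply: convex_itv_second_derivative.
- by move=> x /andP[/gtN1/is_derive_profile ? _]; exact: ex_derive.
- by move=> x /andP[/ltW/gtN1/is_derive_derive_profile ? _]; exact: ex_derive.
- move=> x /andP[x_gt0 xM]; have /gtN1/is_derive_derive_profile ? := ltW x_gt0.
  by rewrite derive_val /slope gt_eqF // addrC DDq_ge0 // x_gt0.
Qed.

End Slope.

(* For radial [f] this extends [psi'] from ]0, +oo[ to a derivable function
   on all of R; that is what makes [psi'(r) / r] continuous at [0]. *)
Definition axial_derivative {R : realType} {n : nat} (f : 'rV[R]_n.+1 -> R)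
    (xs : 'rV[R]_n.+1) (s : R) : R :=
  'D_(basis_vec R ord0) f (xs + s *: basis_vec R ord0).

Section RadialFunction.
Context {R : realType} {n : nat}.
Context {f : 'rV[R]_n.+1 -> R} {xs : 'rV[R]_n.+1} {psi : R -> R}.
Hypothesis f_twice : twice_differentiable f.
Hypothesis f_pc : strictly_pseudoconvex f.
Hypothesis f_min : forall x, f xs <= f x.
Hypothesis psi_derivable : forall r, 0 < r -> derivable psi r 1.
Hypothesis f_radial : forall x, f x = psi (enorm (x - xs)).

Local Notation e := (basis_vec R (@ord0 n)).
Local Notation q := (axial_derivative f xs).

Lemma axial_derivative_derivable s : derivable q s 1.
Proof.
by case: f_twice => _ Df_diff; exact: derivable_line (diff_derivable (Df_diff _ _)).
Qed.

Lemma axial_derivative0 : q 0 = 0.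
Proof.
have [f_diff _] := f_twice.
have : is_derive (0 : R) 1 (fun s : R => f (xs + s *: e)) 0.
  apply: (@derive1_at_min _ _ (-1) 1); first lra.
  - by move=> t _; exact: derivable_line (diff_derivable (f_diff _)).
  - by rewrite in_itv /= ltrN10 ltr01.
  - by move=> t _; rewrite scale0r addr0.
by rewrite /axial_derivative derive_line => ?; rewrite derive_val.
Qed.

Lemma axial_derivative_psi s : 0 < s -> q s = derive1 psi s.
Proof.
move=> s_gt0; have e0 : e != 0 by rewrite -enorm_gt0 enorm_basis.
rewrite /axial_derivative (derive_radial f_radial e0 s_gt0) enorm_basis ?mul1r ?mulr1 //.
exact: psi_derivable.
Qed.

Lemma derive_axial_derivative s : 0 < s -> 'D_1 q s = derive1 (derive1 psi) s.
Proof.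
move=> s_gt0; rewrite derive1E; apply: near_eq_derive.
by near=> r; apply: axial_derivative_psi; near: r; exact: lt_nbhsr.
Unshelve. all: by end_near. Qed.

Lemma grad_dotp_radial v t : 0 < t ->
  dotp (grad f (xs + t *: v)) v / t = enorm v ^+ 2 * slope q (t * enorm v).
Proof.
move=> t_gt0; have [->|v0] := eqVneq v 0.
  by rewrite dotpr0 enorm0 mul0r expr2 !mul0r.
have v_gt0 : 0 < enorm v by rewrite enorm_gt0.
have tv_gt0 : 0 < t * enorm v by rewrite mulr_gt0.
have [f_diff _] := f_twice.
rewrite dotp_grad // (derive_radial f_radial v0 t_gt0); last exact: psi_derivable.
rewrite /slope gt_eqF // axial_derivative_psi //.
by field; rewrite !gt_eqF.
Qed.

Lemma gfun_radial x : gfun f xs x = f xs + profile q (enorm (x - xs)).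
Proof.
have q_der := axial_derivative_derivable; have q0 := axial_derivative0.
rewrite /gfun -(profile_integral q_der q0 _ (enorm_ge0 (x - xs))).
congr (_ + _); apply: eq_Rintegral_itv_obnd.
  exact/continuous_subspaceT/(scaled_slope_continuous q_der q0).
by move=> t; rewrite inE /= in_itv /= => /andP[t_gt0 _]; rewrite grad_dotp_radial.
Qed.

Lemma grad_dotp_div_ge0 v t : 0 <= t -> 0 <= dotp (grad f (xs + t *: v)) v / t.
Proof.
rewrite le_eqVlt => /predU1P[<-|t_gt0]; first by rewrite invr0 mulr0.
have [->|v0] := eqVneq v 0; first by rewrite dotpr0 mul0r.
rewrite divr_ge0 ?ltW //.
have x_neq : xs + t *: v != xs.
  by rewrite -subr_eq0 addrC addKr scaler_eq0 negb_or gt_eqF.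
have := pseudoconvex_dotp_grad_gt0 f_pc f_min x_neq.
by rewrite [_ + _ - xs]addrC addKr dotpZr pmulr_rgt0.
Qed.

Lemma profile_ge0 r : 0 <= r -> 0 <= profile q r.
Proof.
move=> r_ge0; have vE : xs + r *: e - xs = r *: e by rewrite addrC addKr.
have := gfun_radial (xs + r *: e).
rewrite vE enormZ enorm_basis mulr1 ger0_norm // /gfun => /addrI <-.
by apply: Rintegral_ge0 => t; rewrite /= in_itv /= => /andP[/grad_dotp_div_ge0].
Qed.

End RadialFunction.

Theorem corollary4 (R : realType) (d : nat) (f : 'rV[R]_d -> R)
    (xs : 'rV[R]_d) (psi : R -> R) (M : R) :
  twice_differentiable f ->
  strictly_pseudoconvex f ->
  (forall x, f xs <= f x) ->
  (forall r, 0 < r -> derivable psi r 1 /\ derivable (derive1 psi) r 1) ->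
  (forall x, f x = psi (enorm (x - xs))) ->
  (forall r, 0 < r <= M -> 0 <= derive1 (derive1 psi) r + derive1 psi r / r) ->
  convex_on [set x | enorm (x - xs) <= M] (gfun f xs).
Proof.
case: d f xs => [|n] f xs f_twice f_pc f_min psi_der f_radial DDpsi.
  exact: convex_on_dim0.
have psi_derivable r : 0 < r -> derivable psi r 1 by case/psi_der.
set q := axial_derivative f xs.
have q_der : forall s, derivable q s 1 := axial_derivative_derivable f_twice.
have q0 : q 0 = 0 := axial_derivative0 f_twice f_min.
have q_conv : convex_itv (profile q) 0 M.
  apply: (profile_convex q_der q0) => r /andP[r_gt0 r_ltM].
  rewrite /q (derive_axial_derivative psi_derivable f_radial) //.
  rewrite (axial_derivative_psi psi_derivable f_radial) //.
  by apply: DDpsi; rewrite r_gt0 ltW.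
have -> : gfun f xs = fun x => f xs + profile q (enorm (x - xs)).
  by apply: funext => x; exact: (gfun_radial f_twice f_min psi_derivable f_radial).
apply/convex_on_addl/convex_on_comp_enorm => // a b a_ge0 ab bM.
apply: (convex_itv_nondecreasing q_conv) => // r /andP[r_ge0 _].
rewrite {1}/profile mul0r.
exact: (profile_ge0 f_twice f_pc f_min psi_derivable f_radial _ r_ge0).
Qed.
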